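(* Let $s\in\mathbb{R}^2$ with $|s|=1$ and $m=s^\perp$. For every $N\in\mathcal{N}_s\setminus\mathcal{M}_s$ there exist $F,G\in\mathcal{M}_s$ with $\operatorname{rank}(F-G)=1$ and $\mu\in(0,1)$ such that $$N=\mu F+(1-\mu)G\qquad\text{and}\qquad|Nm|=|Fm|=|Gm|.$$
   Context: $m=s^\perp=(-s_2,s_1)$; $\mathcal{M}_s=\{F\in\mathbb{R}^{2\times2}:\det F=1,|Fs|=1\}$; $\mathcal{N}_s=\{F\in\mathbb{R}^{2\times2}:\det F=1,|Fs|\le1\}$. *)

From mathcomp Require Import all_boot all_order all_algebra.
From mathcomp Require Import reals.
Set Implicit Arguments. Unset Strict Implicit. Unset Printing Implicit Defensive.
Import Order.TTheory GRing.Theory Num.Theory.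
Local Open Scope ring_scope.

Definition vnorm2 {R : realType} (v : 'cV[R]_2) : R :=
  Num.sqrt (v 0 0 ^+ 2 + v 1 0 ^+ 2).

Definition sperp {R : realType} (s : 'cV[R]_2) : 'cV[R]_2 :=
  \col_(i < 2) (if i == 0 then - s 1 0 else s 0 0).

Definition Ms {R : realType} (s : 'cV[R]_2) (F : 'M[R]_2) : Prop :=
  \det F = 1 /\ vnorm2 (F *m s) = 1.

Definition Ns {R : realType} (s : 'cV[R]_2) (F : 'M[R]_2) : Prop :=
  \det F = 1 /\ vnorm2 (F *m s) <= 1.

From mathcomp Require Import all_boot all_order all_algebra.
From mathcomp Require Import reals.
From mathcomp Require Import ring lra.
Set Implicit Arguments. Unset Strict Implicit. Unset Printing Implicit Defensive.
Import Order.TTheory GRing.Theory Num.Theory.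
Local Open Scope ring_scope.

(* Shear N along the rank-one direction (N m) s^T, where m = s^perp.  This
   fixes N m and the determinant, and moves N s along the line N s + t N m.
   Since |N s| < 1 and N m <> 0, that line leaves the unit disc at two
   parameters t1 < 0 < t2; the two sheared matrices lie in M_s, differ by a
   rank-one matrix, and N is the convex combination of them whose weights
   cancel t1 and t2. *)

Lemma det_mx2 (R : comNzRingType) (A : 'M[R]_2) :
  \det A = A 0 0 * A 1 1 - A 0 1 * A 1 0.
Proof.
rewrite (expand_det_row _ 0) !big_ord_recl big_ord0 /cofactor !det_mx11 !mxE /=.
have -> : lift (0 : 'I_2) 0 = 1 by apply/val_inj.
have -> : lift (1 : 'I_2) 0 = 0 by apply/val_inj.
by rewrite /bump /= expr0 expr1 addr0 mul1r mulN1r mulrN.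
Qed.

Lemma tr_mulmx2 (R : comNzRingType) (x y : 'cV[R]_2) :
  x^T *m y = (x 0 0 * y 0 0 + x 1 0 * y 1 0)%:M.
Proof.
apply/matrixP => i j; rewrite !ord1 !mxE !big_ord_recl big_ord0 !mxE addr0 /=.
by have -> : lift ord0 ord0 = 1 :> 'I_2 by apply/val_inj.
Qed.

Lemma det_mx2_1_add_mul_tr (R : comNzRingType) (x y : 'cV[R]_2) :
  \det (1%:M + x *m y^T) = 1 + (y^T *m x) 0 0.
Proof.
have -> : (1%:M + x *m y^T) = \matrix_(i, j) ((i == j)%:R + x i 0 * y j 0).
  by apply/matrixP => i j; rewrite !mxE big_ord1 !mxE.
rewrite det_mx2 !mxE !big_ord_recl big_ord0 !mxE.
have -> : lift ord0 ord0 = 1 :> 'I_2 by apply/val_inj.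
rewrite /=; ring.
Qed.

Lemma mxrank_mul_tr (F : fieldType) n (x y : 'cV[F]_n) :
  x != 0 -> y != 0 -> \rank (x *m y^T) = 1%N.
Proof.
move=> x0 y0; rewrite mxrankMfree; last by rewrite /row_free rank_rV trmx_eq0 y0.
by rewrite -mxrank_tr rank_rV trmx_eq0 x0.
Qed.

Lemma mulmx_unit_eq0 (R : comUnitRingType) n p (A : 'M[R]_n) (B : 'M[R]_(n, p)) :
  A \in unitmx -> (A *m B == 0) = (B == 0).
Proof.
move=> Au; apply/eqP/eqP => [AB0 | ->]; last exact: mulmx0.
by rewrite -(mulKmx Au B) AB0 mulmx0.
Qed.

Lemma quadratic_roots_of_opposite_sign (R : rcfType) (p : R) {q c : R} :
  0 < q -> c < 0 ->
  exists t1 t2, [/\ t1 < 0 < t2, q * t1 ^+ 2 + 2 * p * t1 + c = 0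
                                 & q * t2 ^+ 2 + 2 * p * t2 + c = 0].
Proof.
move=> q_gt0 c_lt0; have q_neq0 : q != 0 by rewrite gt_eqF.
have qc_lt0 : q * c < 0 by rewrite pmulr_rlt0.
have p2_ge0 := sqr_ge0 p.
pose r := Num.sqrt (p ^+ 2 - q * c).
have r2 : r ^+ 2 = p ^+ 2 - q * c by rewrite sqr_sqrtr //; lra.
have p_lt_r : `|p| < r by rewrite -sqrtr_sqr ltr_sqrt; lra.
have root e : e ^+ 2 = r ^+ 2 -> q * ((- p + e) / q) ^+ 2 + 2 * p * ((- p + e) / q) + c = 0.
  move=> e2; have -> : q * ((- p + e) / q) ^+ 2 + 2 * p * ((- p + e) / q) + c
                       = (e ^+ 2 - (p ^+ 2 - q * c)) / q by field.
  by rewrite e2 r2 subrr mul0r.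
exists ((- p + - r) / q), ((- p + r) / q); split; [|apply: root; exact: sqrrN|exact: root].
case/ltr_normlP: p_lt_r => lt1 lt2.
rewrite ltr_pdivrMr // mul0r divr_gt0 ?andbT; lra.
Qed.

Lemma convex_weight_cancelling (R : realFieldType) (t1 t2 : R) :
  t1 < 0 < t2 -> exists2 mu, 0 < mu < 1 & mu * t1 + (1 - mu) * t2 = 0.
Proof.
case/andP => t1_lt0 t2_gt0; have d_gt0 : 0 < t2 - t1 by lra.
exists (t2 / (t2 - t1)); last by field; rewrite gt_eqF.
by rewrite divr_gt0 // ltr_pdivrMr // mul1r; lra.
Qed.

Section Vnorm2.
Context {R : realType}.
Implicit Types u v s : 'cV[R]_2.

Lemma vnorm2_ge0 v : 0 <= vnorm2 v.
Proof. exact: sqrtr_ge0. Qed.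

Lemma vnorm2_sqr v : vnorm2 v ^+ 2 = v 0 0 ^+ 2 + v 1 0 ^+ 2.
Proof. by rewrite sqr_sqrtr // addr_ge0 ?sqr_ge0. Qed.

Lemma vnorm2_lt1 v : (vnorm2 v < 1) = (v 0 0 ^+ 2 + v 1 0 ^+ 2 < 1).
Proof. by rewrite /vnorm2 -{1}sqrtr1 ltr_sqrt. Qed.

Lemma vnorm2_eq0 v : (vnorm2 v == 0) = (v == 0).
Proof.
rewrite sqrtr_eq0 le_eqVlt ltNge addr_ge0 ?sqr_ge0 // orbF.
rewrite paddr_eq0 ?sqr_ge0 // !sqrf_eq0.
apply/andP/eqP => [[/eqP v00 /eqP v10] | ->]; last by rewrite !mxE eqxx.
apply/matrixP => i j; rewrite (ord1 j) mxE.
by case: i => [[|[|//]]] lt_i2; [rewrite -v00 | rewrite -v10]; congr (v _ _); apply: val_inj.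
Qed.

Lemma vnorm2_eq1_neq0 v : vnorm2 v = 1 -> v != 0.
Proof. by move=> v1; rewrite -vnorm2_eq0 v1 oner_neq0. Qed.

Lemma vnorm2_sperp s : vnorm2 (sperp s) = vnorm2 s.
Proof. by rewrite /vnorm2 !mxE /= sqrrN addrC. Qed.

Lemma tr_mul_sperp s : s^T *m sperp s = 0.
Proof. by rewrite tr_mulmx2 !mxE /= mulrN mulrC addNr raddf0. Qed.

Lemma tr_mul_vnorm2_eq1 s : vnorm2 s = 1 -> s^T *m s = 1.
Proof.
move=> /eqP; rewrite -(sqrp_eq1 (vnorm2_ge0 s)) vnorm2_sqr => /eqP s1.
by rewrite tr_mulmx2 -!expr2 s1.
Qed.

Lemma line_crosses_unit_circle u v : vnorm2 u < 1 -> v != 0 ->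
  exists t1 t2, [/\ t1 < 0 < t2, vnorm2 (u + t1 *: v) = 1
                                 & vnorm2 (u + t2 *: v) = 1].
Proof.
rewrite vnorm2_lt1 -vnorm2_eq0 => u_lt1 v_neq0.
have v_gt0 : 0 < vnorm2 v ^+ 2 by rewrite exprn_gt0 // lt_neqAle eq_sym v_neq0 vnorm2_ge0.
rewrite vnorm2_sqr in v_gt0.
have c_lt0 : u 0 0 ^+ 2 + u 1 0 ^+ 2 - 1 < 0 by rewrite subr_lt0.
have [t1 [t2 [t12 r1 r2]]] :=
  quadratic_roots_of_opposite_sign (u 0 0 * v 0 0 + u 1 0 * v 1 0) v_gt0 c_lt0.
have on_circle t : (v 0 0 ^+ 2 + v 1 0 ^+ 2) * t ^+ 2
    + 2 * (u 0 0 * v 0 0 + u 1 0 * v 1 0) * t + (u 0 0 ^+ 2 + u 1 0 ^+ 2 - 1) = 0 ->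
  vnorm2 (u + t *: v) = 1.
  move=> rt; rewrite /vnorm2 !mxE -sqrtr1; congr Num.sqrt.
  by apply/eqP; rewrite -subr_eq0 -rt; apply/eqP; ring.
by exists t1, t2; split; rewrite // on_circle.
Qed.

End Vnorm2.

Section PerpUpdate.
Context {R : realType}.
Variables (s : 'cV[R]_2) (N : 'M[R]_2).

Definition perp_update (t : R) : 'M[R]_2 := N + t *: (N *m sperp s *m s^T).

Lemma perp_update_mul_sperp t : perp_update t *m sperp s = N *m sperp s.
Proof. by rewrite mulmxDl -scalemxAl -mulmxA tr_mul_sperp mulmx0 scaler0 addr0. Qed.

Lemma perp_update_mul t :
  vnorm2 s = 1 -> perp_update t *m s = N *m s + t *: (N *m sperp s).
Proof. by move=> s1; rewrite mulmxDl -scalemxAl -mulmxA tr_mul_vnorm2_eq1 // mulmx1. Qed.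

Lemma det_perp_update t : \det (perp_update t) = \det N.
Proof.
have -> : perp_update t = N *m (1%:M + (t *: sperp s) *m s^T).
  by rewrite mulmxDr mulmx1 -scalemxAl -scalemxAr mulmxA.
rewrite det_mulmx det_mx2_1_add_mul_tr -scalemxAr tr_mul_sperp scaler0 mxE.
by rewrite addr0 mulr1.
Qed.

Lemma perp_updateB t1 t2 :
  perp_update t1 - perp_update t2 = ((t1 - t2) *: (N *m sperp s)) *m s^T.
Proof. by apply/matrixP => i j; rewrite !mxE !big_ord1 !mxE; ring. Qed.

Lemma perp_update_convex mu t1 t2 :
  mu *: perp_update t1 + (1 - mu) *: perp_update t2
  = perp_update (mu * t1 + (1 - mu) * t2).
Proof. by apply/matrixP => i j; rewrite !mxE; ring. Qed.

Lemma perp_update0 : perp_update 0 = N.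
Proof. by rewrite /perp_update scale0r addr0. Qed.

End PerpUpdate.

Theorem lemma3p3 (R : realType) (s : 'cV[R]_2) (N : 'M[R]_2) :
  vnorm2 s = 1 ->
  Ns s N -> ~ Ms s N ->
  exists (F G : 'M[R]_2) (mu : R),
    [/\ Ms s F, Ms s G, \rank (F - G) = 1%N & 0 < mu < 1] /\
    [/\ N = mu *: F + (1 - mu) *: G,
        vnorm2 (N *m sperp s) = vnorm2 (F *m sperp s) &
        vnorm2 (F *m sperp s) = vnorm2 (G *m sperp s)].
Proof.
move=> s1 [detN Ns_le1] notMs.
have Ns_lt1 : vnorm2 (N *m s) < 1.
  by rewrite lt_neqAle Ns_le1 andbT; apply/eqP => Ns1; apply: notMs.
have Nm_neq0 : N *m sperp s != 0.
  by rewrite mulmx_unit_eq0 ?unitmxE ?detN ?unitr1 // vnorm2_eq1_neq0 // vnorm2_sperp.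
have [t1 [t2 [t12 Ft1 Ft2]]] := line_crosses_unit_circle Ns_lt1 Nm_neq0.
have [mu mu01 mut] := convex_weight_cancelling t12.
have inMs t : vnorm2 (N *m s + t *: (N *m sperp s)) = 1 -> Ms s (perp_update s N t).
  by move=> Nt1; rewrite /Ms det_perp_update perp_update_mul.
exists (perp_update s N t1), (perp_update s N t2), mu; split; split => //.
- by apply: inMs.
- by apply: inMs.
- rewrite perp_updateB mxrank_mul_tr ?(vnorm2_eq1_neq0 s1) // scaler_eq0 negb_or Nm_neq0 andbT.
  by case/andP: t12 => t1_lt0 t2_gt0; rewrite subr_eq0 lt_eqF // (lt_trans t1_lt0).
- by rewrite perp_update_convex mut perp_update0.
- by rewrite perp_update_mul_sperp.
- by rewrite !perp_update_mul_sperp.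
Qed.
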